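(* Let $X$ be an infinite Hausdorff space. Then every finite rooted tree, equipped with the topology whose open sets are its upward closed subsets, is the image of a continuous surjection from $X$.
   Context: A finite rooted tree is a finite partially ordered set $(T,\le)$ with a least element (the root) such that for every $t\in T$ the set $\{s\in T\mid s\le t\}$ is linearly ordered. A subset $U\subseteq T$ is upward closed if $u\in U$ and $u\le v$ imply $v\in U$. *)

From HB Require Import structures.
From mathcomp Require Import all_boot all_order.
From mathcomp Require Import all_classical all_reals topology.
Set Implicit Arguments. Unset Strict Implicit. Unset Printing Implicit Defensive.
Import Order.TTheory.
Local Open Scope classical_set_scope.
Local Open Scope order_scope.

Definition rooted_tree (d : Order.disp_t) (T : finPOrderType d) : Prop :=
  (exists r : T, forall t : T, r <= t) /\
  (forall t s1 s2 : T, s1 <= t -> s2 <= t -> (s1 <= s2) || (s2 <= s1)).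

Definition upward_closed (d : Order.disp_t) (T : porderType d) (U : set T) : Prop :=
  forall u v : T, U u -> u <= v -> U v.

Definition upset_continuous (X : topologicalType) (d : Order.disp_t)
    (T : porderType d) (f : X -> T) : Prop :=
  forall U : set T, upward_closed U -> open (f @^-1` U).

From HB Require Import structures.
From mathcomp Require Import all_boot all_order.
From mathcomp Require Import all_classical all_reals topology.
Set Implicit Arguments. Unset Strict Implicit.
Local Open Scope classical_set_scope.

(* An infinite Hausdorff space contains a sequence of pairwise disjoint nonempty
   open sets: separate two points of an infinite open set W by disjoint opens A
   and B; one of W `&` A, W `\` A is infinite (finite sets are closed), keep it
   and put a nonempty open piece of the rest aside.  Given such sets V t indexed
   by the points of a finite poset with least element r, send V t to t and every
   other point to r.  The preimage of an upward closed set is either everything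
   (if it contains r) or a union of the open sets V t; of the tree axioms only
   the root is used. *)

Section InfiniteHausdorff.
Variable X : topologicalType.
Hypothesis hX : hausdorff_space X.

Lemma infinite_open_split (W : set X) : open W -> infinite_set W ->
  exists A B : set X,
    [/\ open A /\ A !=set0, open B /\ infinite_set B, A `|` B `<=` W
      & A `&` B = set0].
Proof.
move=> oW iW; have [a Wa] := infinite_setN0 iW.
have iWa : infinite_set (W `\` [set a]) by apply: infinite_setD; last exact: finite_set1.
have [b [Wb /= nba]] := infinite_setN0 iWa.
have ab : a != b by apply/eqP => ab; apply: nba; rewrite ab.
move: hX; rewrite open_hausdorff => /(_ a b ab) [[A B] /= [aA bB] [oA oB /eqP AB0]].
rewrite inE in aA; rewrite inE in bB.
have [finWA|infWA] := pselect (finite_set (W `&` A)).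
- have closedWA : closed (W `&` A).
    by apply: (@accessible_finite_set_closed X).1 finWA; exact: hausdorff_accessible.
  exists (W `&` A), (W `\` (W `&` A)); split.
  + by split; [exact: openI | exists a].
  + split; last exact: infinite_setD.
    by rewrite setDE; apply: openI => //; exact: closed_openC.
  + by rewrite subUset; split=> x [].
  + by rewrite setDE setICA setICr setI0.
- exists (W `&` B), (W `&` A); split.
  + by split; [exact: openI | exists b].
  + by split; first exact: openI.
  + by rewrite subUset; split=> x [].
  + by rewrite setIACA setIid [B `&` A]setIC AB0 setI0.
Qed.

Lemma disjoint_open_seq : infinite_set [set: X] ->
  exists V : nat -> set X,
    [/\ forall n, open (V n), forall n, V n !=set0 & trivIset setT V].
Proof.
move=> iX.
have split_ex (W : set X) : exists AB : set X * set X,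
    open W /\ infinite_set W ->
    [/\ open AB.1 /\ AB.1 !=set0, open AB.2 /\ infinite_set AB.2,
        AB.1 `|` AB.2 `<=` W & AB.1 `&` AB.2 = set0].
  have [[oW iW]|nW] := pselect (open W /\ infinite_set W).
    by have [A [B ?]] := infinite_open_split oW iW; exists (A, B).
  by exists (set0, set0) => /nW.
have [g gP] := choice split_ex.
pose W n := iter n (fun W => (g W).2) setT.
have W_inv n : open (W n) /\ infinite_set (W n).
  elim: n => [|n [oW iW]]; first by split => //; exact: openT.
  by have [] := gP _ (conj oW iW).
have {}gP n := gP (W n) (W_inv n).
have W_decr n k : W (k + n) `<=` W n.
  elim: k => [//|k IH] x Wx; apply: IH.
  by have [_ _ + _] := gP (k + n); apply; right.
exists (fun n => (g (W n)).1); split.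
- by move=> n; have [[]] := gP n.
- by move=> n; have [[]] := gP n.
apply: ltn_trivIset => n m ltmn; apply/seteqP; split => // x [Vm Vn].
have [_ _ _ disj_m] := gP m.
have Wn : W n x by have [_ _ + _] := gP n; apply; left.
have : W m.+1 x by move: Wn; rewrite -(subnK ltmn); exact: W_decr.
by rewrite -disj_m.
Qed.

End InfiniteHausdorff.

Section RegionMap.
Variables (X : topologicalType) (d : Order.disp_t) (T : finPOrderType d).
Variables (r : T) (V : T -> set X).
Hypothesis V_disj : trivIset setT V.

Definition region_map (x : X) : T := odflt r [pick t | `[< V t x >]].

Lemma region_mapE t x : V t x -> region_map x = t.
Proof.
move=> Vtx; rewrite /region_map; case: pickP => [s /asboolP Vsx|/(_ t)] /=.
  by apply: V_disj => //; exists x.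
by move/asboolPn.
Qed.

Lemma preimage_region_map (U : set T) :
  ~ U r -> region_map @^-1` U = \bigcup_(t in U) V t.
Proof.
move=> Ur; apply/seteqP; split => x /=; last by move=> [t Ut /region_mapE ->].
rewrite /region_map; case: pickP => [t /asboolP Vtx Ut|_ //].
by exists t.
Qed.

Lemma region_map_upset_continuous :
  (forall t, r <= t)%O -> (forall t, open (V t)) -> upset_continuous region_map.
Proof.
move=> r_least oV U upU; have [Ur|Ur] := pselect (U r).
  suff -> : region_map @^-1` U = setT by exact: openT.
  by apply/seteqP; split => // x _; exact: upU Ur (r_least _).
by rewrite preimage_region_map //; apply: bigcup_open => t _; exact: oV.
Qed.

Lemma region_map_surj : (forall t, V t !=set0) ->
  forall t, exists x, region_map x = t.
Proof. by move=> V0 t; have [x Vtx] := V0 t; exists x; exact: region_mapE. Qed.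

End RegionMap.

Theorem lemma9p5 (X : topologicalType) (hX : hausdorff_space X)
  (infX : ~ finite_set [set: X])
  (d : Order.disp_t) (T : finPOrderType d) (hT : rooted_tree T) :
  exists f : X -> T, upset_continuous f /\ (forall t : T, exists x : X, f x = t).
Proof.
have [[r r_least] _] := hT.
have [V [oV V0 V_disj]] := disjoint_open_seq hX infX.
pose VT (t : T) := V (enum_rank t).
have VT_disj : trivIset setT VT.
  by move=> s t _ _ /(V_disj _ _ I I) /val_inj /enum_rank_inj.
exists (region_map r VT); split.
- exact: region_map_upset_continuous VT_disj r_least (fun t => oV _).
- exact: region_map_surj VT_disj (fun t => V0 _).
Qed.
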